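(* Let $\alpha_1,\alpha_2 \ge 0$, $\beta_1,\beta_2 \in [0,1]$, and let $U_1, U_2, V_1, V_2$ be random variables with $U_1, U_2$ independent and $V_1, V_2$ independent. If $V_i \preceq_{(\alpha_i, \beta_i)} U_i$ for $i \in \{1,2\}$, then $V_1 + V_2 \preceq_{(\alpha_1+\alpha_2,\, \beta_1+\beta_2)} U_1 + U_2$.
   Context: For a random variable $X$ (possibly taking values $\pm\infty$) let $\bar{F}_X(x) = 1 - F_X(x)$ be its complementary CDF. Given $\alpha \ge 0$, $\beta \in [0,1]$, we write $V \preceq_{(\alpha,\beta)} U$ ($U$ $(\alpha,\beta)$-approximately stochastically dominates $V$) if $\bar{F}_V(x) \le \bar{F}_U(x-\alpha) + \beta$ for all $x \in [-\infty,\infty]$. *)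

From HB Require Import structures.
From mathcomp Require Import all_boot all_order all_algebra.
From mathcomp Require Import all_classical all_reals all_analysis measurable_realfun.
Set Implicit Arguments. Unset Strict Implicit. Unset Printing Implicit Defensive.
Import Order.TTheory GRing.Theory Num.Theory.
Local Open Scope classical_set_scope.
Local Open Scope ring_scope.
Local Open Scope ereal_scope.

Definition ccdf d (T : measurableType d) (R : realType) (P : probability T R)
  (X : T -> \bar R) (x : \bar R) : \bar R :=
  1 - P [set w | X w <= x].

Definition approx_sdom d (T : measurableType d) (R : realType) (P : probability T R)
  (alpha beta : R) (V U : T -> \bar R) : Prop :=
  forall x : \bar R, ccdf P V x <= ccdf P U (x - alpha%:E) + beta%:E.

Definition indep2 d (T : measurableType d) (R : realType) (P : probability T R)
  (X Y : T -> \bar R) : Prop :=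
  forall A B : set (\bar R), measurable A -> measurable B ->
    P (X @^-1` A `&` Y @^-1` B) = P (X @^-1` A) * P (Y @^-1` B).

(* By independence, P[V1 + V2 > x] is the mass of the half-plane
   {(a, b) | a + b > x} under the product of the laws of V1 and V2.  Computing
   it by Tonelli as the integral over a ~ law V1 of P[V2 > x - a], the
   domination of V2 by U2 holds pointwise in a, so V2 can be replaced by U2 at
   the price of (alpha2, beta2).  Half-planes are symmetric in the two
   coordinates, so the product of laws may be swapped and the same step
   replaces V1 by U1 at the price of (alpha1, beta1). *)

From Pilot Require Import Defs.
From HB Require Import structures.
From mathcomp Require Import all_boot all_order all_algebra.
From mathcomp Require Import all_classical all_reals all_analysis measurable_realfun.
Set Implicit Arguments. Unset Strict Implicit. Unset Printing Implicit Defensive.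
Import Order.TTheory GRing.Theory Num.Theory.
Local Open Scope classical_set_scope.
Local Open Scope ring_scope.

Section law.
Context d d' (T : measurableType d) (T' : measurableType d') (R : realType)
  (P : probability T R).

Definition law (V : T -> T') (mV : measurable_fun setT V) : probability T' R :=
  distribution P (mfun_Sub (mem_set mV : V \in mfun)).

Lemma lawE (V : T -> T') (mV : measurable_fun setT V) (A : set T') :
  law mV A = P (V @^-1` A).
Proof. by []. Qed.

End law.

Lemma ccdf_gt d (T : measurableType d) (R : realType) (P : probability T R)
    (V : T -> \bar R) (x : \bar R) :
  measurable_fun setT V -> Defs.ccdf P V x = P [set w | x < V w]%E.
Proof.
move=> mV; rewrite /Defs.ccdf -probability_setC; last first.
  by rewrite -[X in measurable X]setTI; exact: emeasurable_fun_infty_c.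
by congr (P _); apply/seteqP; split=> w /=; rewrite ltNge => /negP.
Qed.

Lemma indep2_law_pair d (T : measurableType d) (R : realType)
    (P : probability T R) (X Y : T -> \bar R)
    (mX : measurable_fun setT X) (mY : measurable_fun setT Y) :
  indep2 P X Y -> forall S, measurable S ->
  P ((fun w => (X w, Y w)) @^-1` S) = (law P mX \x law P mY)%E S.
Proof.
move=> XY S mS; rewrite -(lawE P (measurable_fun_pair mX mY)).
exact/esym/product_measure_unique.
Qed.

Lemma product_measure1_swap d1 d2 (T1 : measurableType d1)
    (T2 : measurableType d2) (R : realType)
    (m1 : {sigma_finite_measure set T1 -> \bar R})
    (m2 : {sigma_finite_measure set T2 -> \bar R}) (S : set (T1 * T2)) :
  measurable S -> (m1 \x m2)%E S = (m2 \x m1)%E (swap_pair @^-1` S).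
Proof.
move=> mS; transitivity ((m1 \x^ m2)%E S).
  by apply: product_measure_unique => // A B mA mB; exact: product_measure2E.
(* both sides integrate [b |-> m1 [set a | (a, b) \in S]] against [m2] *)
by [].
Qed.

Section sum_gt.
Local Open Scope ereal_scope.
Context (R : realType).

Definition sum_gt (y : \bar R) : set (\bar R * \bar R) := [set z | y < z.1 + z.2].

Lemma measurable_sum_gt (y : \bar R) : measurable (sum_gt y).
Proof.
rewrite -[sum_gt y]setTI.
exact: (emeasurable_fun_o_infty measurableT
  (emeasurable_funD measurable_fst measurable_snd)).
Qed.

Lemma product_measure1_sum_gtC
    (m1 m2 : {sigma_finite_measure set \bar R -> \bar R}) (y : \bar R) :
  (m1 \x m2) (sum_gt y) = (m2 \x m1) (sum_gt y).
Proof.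
rewrite product_measure1_swap; last exact: measurable_sum_gt.
by congr (_ _); apply/seteqP; split=> -[a b]; rewrite /sum_gt /= addeC.
Qed.

End sum_gt.

Lemma indep2_sum_gt d (T : measurableType d) (R : realType)
    (P : probability T R) (X Y : T -> \bar R)
    (mX : measurable_fun setT X) (mY : measurable_fun setT Y) (y : \bar R) :
  indep2 P X Y ->
  P [set w | y < X w + Y w]%E = (law P mX \x law P mY)%E (sum_gt y).
Proof. by move=> XY; rewrite -indep2_law_pair//; exact: measurable_sum_gt. Qed.

(* [-oo + +oo = -oo] in [\bar R] *)
Lemma lte_addy (R : realType) (y v : \bar R) :
  y != +oo%E -> (y < v + +oo)%E = (-oo < v)%E.
Proof. by case: y => [r| |] // _; case: v => [s| |] /=; rewrite ?ltry ?ltNyr ?ltxx. Qed.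

Section approx_sdom.
Local Open Scope ereal_scope.
Context d (T : measurableType d) (R : realType) (P : probability T R)
  (alpha beta : R) (V U : T -> \bar R).
Hypotheses (beta_ge0 : (0 <= beta)%R) (mV : measurable_fun setT V)
  (mU : measurable_fun setT U) (VU : approx_sdom P alpha beta V U).

Lemma approx_sdom_shift (c y : \bar R) :
  P [set w | y < V w + c] <= P [set w | y - alpha%:E < U w + c] + beta%:E.
Proof.
have rhs_ge0 S : 0 <= P S + beta%:E by rewrite adde_ge0// lee_fin.
case: c => [r| |].
- have -> : [set w | y < V w + r%:E] = [set w | y - r%:E < V w].
    by apply: eq_set => w; rewrite lteBlDr.
  have -> : [set w | y - alpha%:E < U w + r%:E] =
            [set w | y - r%:E - alpha%:E < U w].
    by apply: eq_set => w; rewrite addeAC [in RHS]lteBlDr.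
  by have := VU (y - r%:E); rewrite !ccdf_gt.
- have [->|y_fin] := eqVneq y +oo.
    have -> : [set w | +oo < V w + +oo] = set0.
      by apply/seteqP; split=> w //=; rewrite ltNge leey.
    by rewrite measure0.
  have ya_fin : y - alpha%:E != +oo by case: y y_fin.
  have -> : [set w | y < V w + +oo] = [set w | -oo < V w].
    by apply: eq_set => w; rewrite lte_addy.
  have -> : [set w | y - alpha%:E < U w + +oo] = [set w | -oo < U w].
    by apply: eq_set => w; rewrite lte_addy.
  by have := VU -oo; rewrite !ccdf_gt.
- have -> : [set w | y < V w + -oo] = set0.
    by apply/seteqP; split=> w //=; case: (V w) => [?| |] //=; rewrite ltNge leNye.
  by rewrite measure0.
Qed.

Lemma approx_sdom_product (m : probability (\bar R) R) (y : \bar R) :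
  (m \x law P mV) (sum_gt y) <=
  (m \x law P mU) (sum_gt (y - alpha%:E)) + beta%:E.
Proof.
have sectionE (W : T -> \bar R) (mW : measurable_fun setT W) z a :
    law P mW (xsection (sum_gt z) a) = P [set w | z < W w + a].
  rewrite lawE; congr (P _); apply: eq_set => w.
  by rewrite /preimage /xsection /sum_gt /= in_setE /= addeC.
have msection (W : T -> \bar R) (mW : measurable_fun setT W) z :
    measurable_fun setT (law P mW \o xsection (sum_gt z)).
  exact: measurable_fun_xsection (measurable_sum_gt z).
have int_beta : \int[m]_a (cst beta%:E) a = beta%:E.
  by rewrite integral_cst//= probability_setT mule1.
rewrite /product_measure1 -[X in _ <= _ + X]int_beta -ge0_integralD//.
apply: ge0_le_integral => //.
  by apply: emeasurable_funD => //; exact: measurable_cst.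
by move=> a _; rewrite /= !sectionE; exact: approx_sdom_shift.
Qed.

End approx_sdom.

Theorem mainTheorem3 (d : measure_display) (T : measurableType d) (R : realType)
  (P : probability T R) (alpha1 alpha2 beta1 beta2 : R)
  (U1 U2 V1 V2 : T -> \bar R) :
  0 <= alpha1 -> 0 <= alpha2 ->
  0 <= beta1 <= 1 -> 0 <= beta2 <= 1 ->
  measurable_fun setT U1 -> measurable_fun setT U2 ->
  measurable_fun setT V1 -> measurable_fun setT V2 ->
  indep2 P U1 U2 -> indep2 P V1 V2 ->
  approx_sdom P alpha1 beta1 V1 U1 -> approx_sdom P alpha2 beta2 V2 U2 ->
  approx_sdom P (alpha1 + alpha2) (beta1 + beta2)
    (fun w => (V1 w + V2 w)%E) (fun w => (U1 w + U2 w)%E).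
Proof.
move=> _ _ /andP[beta1_ge0 _] /andP[beta2_ge0 _] mU1 mU2 mV1 mV2 U12 V12 VU1 VU2 x.
rewrite !ccdf_gt; [|exact: emeasurable_funD ..].
rewrite (indep2_sum_gt mV1 mV2 _ V12) (indep2_sum_gt mU1 mU2 _ U12).
have -> : (x - (alpha1 + alpha2)%:E = x - alpha2%:E - alpha1%:E)%E.
  by rewrite EFinD oppeD// addeA addeAC.
apply: (le_trans (approx_sdom_product beta2_ge0 mV2 mU2 VU2 (law P mV1) x)).
rewrite EFinD (addeA _ beta1%:E) leeD2r// product_measure1_sum_gtC.
rewrite [X in (_ <= X + _)%E]product_measure1_sum_gtC.
exact: approx_sdom_product.
Qed.
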